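(* Let $h,n\geq 2$ and let $V<S_h$ be a proper subgroup such that there exists a preference profile $p\in\mathcal{P}$ with $\mathrm{Stab}_{S_h\times\{id\}}(p)\leq V\times\{id\}$. Then $V\times\{id\}$ is an anonymity group with respect to $(h,n)$.
   Context: Permutations compose as $(\sigma\tau)(x)=\sigma(\tau(x))$. Let $H=[h]$, $G=S_h\times S_n$, and $\mathcal{P}=(S_n)^h$ (preference profiles, linear orders on $[n]$ being identified with elements of $S_n$). $G$ acts on $\mathcal{P}$ by $(p^{(\varphi,\psi)})_i=\psi\,p_{\varphi^{-1}(i)}$; for $U\leq G$, $\mathrm{Stab}_U(p)=\{g\in U:p^g=p\}$. A social preference function (SPF) is any function $F:\mathcal{P}\to S_n$. Its symmetry group is $G(F)=\{(\varphi,\psi)\in G: F(p^{(\varphi,\psi)})=\psi F(p)\ \forall p\}$ and its anonymity group is $G_1(F)=G(F)\cap(S_h\times\{id\})$. A subgroup $U\leq S_h\times\{id\}$ is an anonymity group with respect to $(h,n)$ if $U=G_1(F)$ for some SPF $F$. *)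

From mathcomp Require Import all_boot all_fingroup.
Set Implicit Arguments.
Unset Strict Implicit.
Unset Printing Implicit Defensive.
Local Open Scope group_scope.

(* Preference profiles: h-tuples of linear orders on [n], identified with 'S_n. *)
Definition profile (h n : nat) := {ffun 'I_h -> 'S_n}.

(* Paper composition (sigma tau)(x) = sigma (tau x); in MathComp,
   (s * t) x = t (s x), so sigma o tau = tau * sigma. *)
Definition pcomp n (s t : 'S_n) : 'S_n := t * s.

Definition pact h n (p : profile h n) (g : 'S_h * 'S_n) : profile h n :=
  [ffun i => pcomp g.2 (p (g.1^-1 i))].

Definition Gfull h n : {set 'S_h * 'S_n} := [set: 'S_h * 'S_n].
Definition Sh_id h n : {set 'S_h * 'S_n} := setX [set: 'S_h] [set 1].

Definition Stab h n (U : {set 'S_h * 'S_n}) (p : profile h n) : {set 'S_h * 'S_n} :=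
  [set g in U | pact p g == p].

Definition SPF h n := profile h n -> 'S_n.

Definition symgroup h n (F : SPF h n) : {set 'S_h * 'S_n} :=
  [set g : 'S_h * 'S_n | [forall p : profile h n, F (pact p g) == pcomp g.2 (F p)]].

Definition anongroup h n (F : SPF h n) : {set 'S_h * 'S_n} :=
  symgroup F :&: Sh_id h n.

Definition is_anonymity_group h n (U : {set 'S_h * 'S_n}) : Prop :=
  U \subset Sh_id h n /\ exists F : SPF h n, U = anongroup F.

(** The SPF that ranks every profile of the V-orbit of p by the identity and
    every other profile by a fixed non-identity order has as anonymity group
    the setwise stabiliser of that orbit.  Since the stabiliser of p lies in V,
    a voter permutation a mapping p into its V-orbit, p^a = p^v, satisfies
    v a^-1 \in Stab(p) <= V, so the setwise stabiliser of the orbit is V. *)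
From Pilot Require Import Defs.
From mathcomp Require Import all_boot all_fingroup.
Set Implicit Arguments.
Unset Strict Implicit.
Unset Printing Implicit Defensive.
Local Open Scope group_scope.

Section OrbitNormaliser.

Variables (aT : finGroupType) (rT : finType) (to : {action aT &-> rT}).

Lemma astabs_orbit (V : {group aT}) x :
  'C[x | to] \subset V -> 'N(orbit to V x | to) = V.
Proof.
move=> sCxV; apply/setP => a; apply/astabsP/idP => [nOa | Va y].
  have /orbitP[v Vv xv_xa] : to x a \in orbit to V x by rewrite nOa orbit_refl.
  have /(subsetP sCxV) : v * a^-1 \in 'C[x | to].
    by apply/astab1P; rewrite actM xv_xa actK.
  by rewrite groupMl // groupV.
exact: orbit_actr.
Qed.

End OrbitNormaliser.

Section VoterAction.

Variables h n : nat.

Definition voter_act (p : profile h n) (a : 'S_h) : profile h n := pact p (a, 1).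

Lemma voter_act1 : voter_act^~ 1 =1 id.
Proof.
move=> p; apply/ffunP => i.
by rewrite /voter_act /pact ffunE /= invg1 perm1 /Defs.pcomp mulg1.
Qed.

Lemma voter_actM p : act_morph voter_act p.
Proof.
move=> a b; apply/ffunP => i.
by rewrite /voter_act /pact !ffunE /= invMg permM /Defs.pcomp !mulg1.
Qed.

Definition voter_action : {action 'S_h &-> profile h n} :=
  TotalAction voter_act1 voter_actM.

Lemma Stab_Sh_id p : Stab (Sh_id h n) p = setX 'C[p | voter_action] [set 1].
Proof.
apply/setP => -[a s]; rewrite !inE /=.
case: eqVneq => [-> | _]; last by rewrite andbF.
by rewrite andbT sub1set inE.
Qed.

Definition indicator_spf (O : {set profile h n}) (s : 'S_n) : SPF h n :=
  fun q => if q \in O then 1 else s.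

Lemma anongroup_indicator_spf O s :
  s != 1 -> anongroup (indicator_spf O s) = setX 'N(O | voter_action) [set 1].
Proof.
move=> s_neq1; apply/setP => -[a b].
rewrite inE !in_setX in_setT in_set1 [_ \in symgroup _]inE /=.
case: eqVneq => [-> | _]; last by rewrite !andbF.
rewrite !andbT; apply/forallP/astabsP => [F_inv q | nOa q].
  move: (F_inv q); rewrite /indicator_spf /Defs.pcomp mulg1 /=.
  by do 2 case: (_ \in O); rewrite // ?(eq_sym 1) (negbTE s_neq1).
rewrite /indicator_spf /Defs.pcomp mulg1.
by have /= -> := nOa q.
Qed.

End VoterAction.

Lemma exists_perm_neq1 n : 1 < n -> exists s : 'S_n, s != 1.
Proof.
move=> n_gt1; have n_gt0 := ltnW n_gt1.
exists (tperm (Ordinal n_gt0) (Ordinal n_gt1)).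
by apply/eqP => /permP/(_ (Ordinal n_gt0)); rewrite tpermL perm1 => /(congr1 val).
Qed.

Theorem mainTheorem2 (h n : nat) (V : {group 'S_h}) :
  2 <= h -> 2 <= n ->
  V \proper [set: 'S_h] ->
  (exists p : profile h n, Stab (Sh_id h n) p \subset setX V [set 1]) ->
  is_anonymity_group (setX V [set 1 : 'S_n]).
Proof.
move=> _ n_gt1 _ [p sStabV].
have [s s_neq1] := exists_perm_neq1 n_gt1.
have sCpV : 'C[p | voter_action h n] \subset V.
  apply/subsetP => a Cpa; have := subsetP sStabV (a, 1).
  by rewrite Stab_Sh_id !in_setX in_set1 Cpa eqxx => /(_ isT) /andP[].
split; first exact: setXS (subsetT V) (subxx _).
exists (indicator_spf (orbit (voter_action h n) V p) s).
by rewrite anongroup_indicator_spf // astabs_orbit.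
Qed.
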